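(* For integers $m,n\ge0$, $$\sum_{i=2n-m+1}^{m}\binom{m}{i}\frac{(m+i)!}{(m+i-2n-1)!}(-2)^{-i}=0,$$ where $\binom{m}{i}=0$ for $i<0$. *)

From mathcomp Require Import all_boot all_order all_algebra.
Set Implicit Arguments. Unset Strict Implicit. Unset Printing Implicit Defensive.

From mathcomp Require Import all_boot all_order all_algebra.
From mathcomp Require Import ring zify.
Import Order.TTheory GRing.Theory Num.Theory.
Local Open Scope ring_scope.

(* The polynomial (X (X + 1))^m = sum_i C(m, i) X^(m + i) is invariant under
   the reflection X |-> -1 - X about -1/2, so all its odd-order derivatives
   vanish at -1/2.  Evaluating the (2n + 1)-st derivative there termwise and
   multiplying by (-1/2)^(2n + 1 - m) gives the sum of the statement; the
   terms below the lower summation bound vanish because the falling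
   factorial (m + i)^_(2n + 1) is zero for m + i < 2n + 1. *)

Section Reflection.

Variable R : comNzRingType.
Implicit Types (p : {poly R}) (c : R).

Lemma derivn_comp_reflect k p c :
  (p \Po (c%:P - 'X))^`(k) = (-1) ^+ k *: (p^`(k) \Po (c%:P - 'X)).
Proof.
elim: k p => [|k IHk] p; first by rewrite !derivn0 expr0 scale1r.
rewrite derivSn deriv_comp derivB derivC derivX sub0r mulrN1 derivnN IHk.
by rewrite -derivSn exprS mulN1r scaleNr.
Qed.

Lemma horner_comp_reflect p c x : (p \Po (c%:P - 'X)).[x] = p.[c - x].
Proof. by rewrite horner_comp !hornerE. Qed.

End Reflection.

Lemma derivn_odd_reflect_invariant_eq0 (F : numFieldType) (p : {poly F}) c k :
  p \Po (c%:P - 'X) = p -> odd k -> (p^`(k)).[c / 2] = 0.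
Proof.
move=> p_inv k_odd; apply/eqP; rewrite -eqNr; apply/eqP.
have half_fixed : c - c / 2 = c / 2 by rewrite {1}(splitr c) addrK.
rewrite -{1}p_inv derivn_comp_reflect hornerZ horner_comp_reflect half_fixed.
by rewrite -signr_odd k_odd expr1 mulN1r opprK.
Qed.

Section FallingFactorialSums.

Variable R : comNzRingType.

Lemma comp_reflect_X_Xaddn1_exp m :
  ('X * ('X + 1)) ^+ m \Po ((-1)%:P - 'X) = ('X * ('X + 1)) ^+ m :> {poly R}.
Proof.
rewrite -comp_Xn_poly -comp_polyA comp_polyM comp_polyD comp_polyX comp_polyC.
by congr (_ \Po _); ring.
Qed.

Lemma horner_derivn_X_Xaddn1_exp m k (x : R) :
  ((('X * ('X + 1)) ^+ m)^`(k)).[x] =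
  \sum_(i < m.+1) 'C(m, i)%:R * ((m + i) ^_ k)%:R * x ^+ (m + i - k).
Proof.
rewrite exprMn exprD1n mulr_sumr raddf_sum horner_sum; apply: eq_bigr => i _.
rewrite mulrnAr -exprD raddfMn /= derivnXn hornerMn hornerMn hornerXn.
by rewrite -(mulr_natl (x ^+ _ *+ _)) -(mulr_natl (x ^+ _)) mulrA.
Qed.

Lemma ffact_sum_shift m k (x : R) :
  x ^+ k * \sum_(i < m.+1) 'C(m, i)%:R * ((m + i) ^_ k)%:R * x ^+ (m + i - k) =
  x ^+ m * \sum_(i < m.+1) 'C(m, i)%:R * ((m + i) ^_ k)%:R * x ^+ i.
Proof.
rewrite !mulr_sumr; apply: eq_bigr => i _.
have [k_le | k_gt] := leqP k (m + i); last by rewrite ffact_small // !(mulr0, mul0r).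
by rewrite mulrCA -exprD subnKC // exprD mulrCA.
Qed.

End FallingFactorialSums.

Lemma natr_fact_div_fact_sub (F : numFieldType) n k : (k <= n)%N ->
  (n`!)%:R / ((n - k)`!)%:R = (n ^_ k)%:R :> F.
Proof.
move=> k_le_n; rewrite -(ffact_fact k_le_n) natrM mulfK //.
by rewrite pnatr_eq0 -lt0n fact_gt0.
Qed.

Theorem lemma4p10 (m n : nat) :
  \sum_((2 * n + 1 - m)%N <= i < m.+1)
     ('C(m, i)%:R * (((m + i)`!)%:R / ((m + i - (2 * n + 1))`!)%:R)
        * ((- 2 : rat) ^+ i)^-1) = 0.
Proof.
set k := (2 * n + 1)%N; set x : rat := (-1) / 2.
have x_neq0 : x != 0 by [].
rewrite big_geq_mkord big_mkcond
  (eq_bigr (fun i : 'I_m.+1 => 'C(m, i)%:R * ((m + i) ^_ k)%:R * x ^+ i)); last first.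
  move=> i _; have [lo_le_i | i_lt_lo] := leqP (k - m) i; last first.
    by rewrite ffact_small ?mulr0 ?mul0r //; lia.
  by rewrite natr_fact_div_fact_sub; [rewrite -exprVn | lia].
apply: (mulfI (expf_neq0 m x_neq0)); rewrite mulr0 -ffact_sum_shift.
rewrite -horner_derivn_X_Xaddn1_exp derivn_odd_reflect_invariant_eq0 ?mulr0 //.
  exact: comp_reflect_X_Xaddn1_exp.
by rewrite /k addn1 /= mul2n odd_double.
Qed.
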